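(* Let $\mathbf{AUS}_3$ be the set of density matrices $\sigma$ on $\mathbb{C}^2\otimes\mathbb{C}^2$ such that for every unitary $U$ on $\mathbb{C}^2\otimes\mathbb{C}^2$, every choice of unit vectors $\hat u_1,\hat u_2,\hat u_3\in\mathbb{R}^3$ and every choice of orthonormal vectors $\hat v_1,\hat v_2,\hat v_3\in\mathbb{R}^3$, $$\frac{1}{\sqrt3}\Big|\sum_{i=1}^3\mathrm{Tr}\big(U\sigma U^\dagger\,(\hat u_i\cdot\vec s)\otimes(\hat v_i\cdot\vec s)\big)\Big|\le 1.$$ Let $|\Upsilon\rangle_{ABC}\in\mathbb{C}^2\otimes\mathbb{C}^2\otimes\mathbb{C}^2$ be any pure three-qubit state, with reduced states $\sigma_{AB}=\mathrm{Tr}_C|\Upsilon\rangle\langle\Upsilon|$ and $\sigma_C=\mathrm{Tr}_{AB}|\Upsilon\rangle\langle\Upsilon|$. Then $\sigma_{AB}\in\mathbf{AUS}_3$ if and only if $\sigma_C=I/2$ is the maximally mixed state.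
   Context: $\vec{s}=(s_1,s_2,s_3)$ denotes the vector of Pauli matrices, and for $\hat w\in\mathbb{R}^3$, $\hat w\cdot\vec s=\sum_k w_k s_k$. *)

From HB Require Import structures.
From mathcomp Require Import all_boot all_order all_algebra.
From mathcomp Require Import complex mxtens.
From mathcomp Require Import reals.
Set Implicit Arguments. Unset Strict Implicit. Unset Printing Implicit Defensive.
Import Order.TTheory GRing.Theory Num.Theory.
Local Open Scope ring_scope.
Local Open Scope complex_scope.

Section Qubits.
Variable R : realType.
Local Notation C := R[i].

Definition adj {m n} (A : 'M[C]_(m, n)) : 'M[C]_(n, m) := (map_mx conjc A)^T.

Definition hermitian {n} (A : 'M[C]_n) := adj A = A.
Definition unitary {n} (U : 'M[C]_n) := U *m adj U = 1%:M.
(* positive semidefinite: <v, A v> >= 0 for all v (order of C: real and >= 0) *)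
Definition psd {n} (A : 'M[C]_n) := forall v : 'cV[C]_n, 0 <= (adj v *m A *m v) 0 0.
Definition density {n} (rho : 'M[C]_n) := [/\ hermitian rho, psd rho & \tr rho = 1].

(* Pauli matrices s_1, s_2, s_3 (indexed by 'I_3 = {0,1,2}) *)
Definition pauli (k : 'I_3) : 'M[C]_2 :=
  \matrix_(i < 2, j < 2)
    (if val k == 0%N then (if val i == val j then 0 else 1)
     else if val k == 1%N then
       (if val i == val j then 0 else if val i == 0%N then - 'i else 'i)
     else (if val i == val j then (if val i == 0%N then 1 else -1) else 0)).

Definition wdots (w : 'rV[R]_3) : 'M[C]_2 := \sum_(k < 3) (w 0 k)%:C *: pauli k.

Definition unit_vec (w : 'rV[R]_3) := \sum_(k < 3) w 0 k ^+ 2 = 1.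
Definition orthonormal3 (v : 'I_3 -> 'rV[R]_3) :=
  forall i j : 'I_3, \sum_(k < 3) v i 0 k * v j 0 k = (i == j)%:R.

Definition AUS3 (sigma : 'M[C]_(2 * 2)) :=
  density sigma /\
  forall (U : 'M[C]_(2 * 2)) (u v : 'I_3 -> 'rV[R]_3),
    unitary U -> (forall i, unit_vec (u i)) -> orthonormal3 v ->
    (Num.sqrt (3 : R))^-1%:C *
      `| \sum_(i < 3) \tr (U *m sigma *m adj U *m (wdots (u i) *t wdots (v i))) | <= 1.

Definition ptrC (rho : 'M[C]_(2 * 2 * 2)) : 'M[C]_(2 * 2) :=
  \matrix_(i, j) \sum_(k < 2) rho (mxtens_index (i, k)) (mxtens_index (j, k)).
Definition ptrAB (rho : 'M[C]_(2 * 2 * 2)) : 'M[C]_2 :=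
  \matrix_(i, j) \sum_(k < 2 * 2) rho (mxtens_index (k, i)) (mxtens_index (k, j)).

End Qubits.

From Pilot Require Import Defs.
From HB Require Import structures.
From mathcomp Require Import all_boot all_order all_algebra.
From mathcomp Require Import fingroup perm complex mxtens spectral.
From mathcomp Require Import reals ring lra zify.
Import Order.TTheory GRing.Theory Num.Theory.
Local Open Scope ring_scope.
Local Open Scope complex_scope.
Set Implicit Arguments. Unset Strict Implicit. Unset Printing Implicit Defensive.

(* Write |Y> = sum_(x,k) W x k |x>|k> with W a 4 x 2 matrix, so that sigma_AB = W W^+
   and sigma_C = (W^+ W)^T.  These have the same nonzero spectrum, hence
   Tr sigma_AB^2 = Tr sigma_C^2, and the qubit state sigma_C equals I/2 iff
   Tr sigma_C^2 <= 1/2.  So it suffices to show that a two-qubit state sigma of rank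
   at most 2 lies in AUS_3 iff Tr sigma^2 <= 1/2.
   If Tr sigma^2 <= 1/2: M = sum_i (u_i.s) (x) (v_i.s) is hermitian, traceless and
   Tr M^2 = 12, so Cauchy-Schwarz for the pair (U sigma U^+ - I/4, M) bounds
   |Tr (U sigma U^+ M)| by sqrt (1/4 * 12) = sqrt 3.
   Conversely, map the eigenbasis of sigma onto the Bell basis.  The resulting
   Bell-diagonal state with weights d_k has a diagonal correlation matrix
   T = diag (t_1, t_2, t_3) with sum_j t_j^2 = 4 sum_k d_k^2 - 1, and suitable
   orthonormal v_i together with u_i proportional to T v_i reach
   sum_i u_i . T v_i = sqrt (3 sum_j t_j^2), provided two of the t_j^2 coincide;
   they do, since sigma has two zero eigenvalues.  Hence AUS_3 forces
   sum_j t_j^2 <= 1, that is Tr sigma^2 <= 1/2. *)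

Section TwoQubits.
Variable R : realType.
Local Notation C := R[i].

Lemma conjcE (x : C) : conjc x = Num.conj x.
Proof. by case: x. Qed.

Lemma adjE m n (A : 'M[C]_(m, n)) i j : adj A i j = conjc (A j i).
Proof. by rewrite !mxE. Qed.

Lemma adjK m n (A : 'M[C]_(m, n)) : adj (adj A) = A.
Proof. by apply/matrixP => i j; rewrite !adjE conjcK. Qed.

Lemma adjM m n p (A : 'M[C]_(m, n)) (B : 'M[C]_(n, p)) :
  adj (A *m B) = adj B *m adj A.
Proof. by rewrite /adj map_mxM trmx_mul. Qed.

Lemma adjD m n (A B : 'M[C]_(m, n)) : adj (A + B) = adj A + adj B.
Proof. by rewrite /adj map_mxD linearD. Qed.

Lemma adjZ m n c (A : 'M[C]_(m, n)) : adj (c *: A) = conjc c *: adj A.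
Proof. by rewrite /adj map_mxZ linearZ. Qed.

Lemma adj_sum m n (I : finType) (F : I -> 'M[C]_(m, n)) :
  adj (\sum_i F i) = \sum_i adj (F i).
Proof. by rewrite /adj raddf_sum /= raddf_sum. Qed.

Lemma adj1 n : adj (1%:M : 'M[C]_n) = 1%:M.
Proof. by rewrite /adj map_mx1 trmx1. Qed.

Lemma adj_tens m n p q (A : 'M[C]_(m, n)) (B : 'M[C]_(p, q)) :
  adj (A *t B) = adj A *t adj B.
Proof. by rewrite /adj map_mxT trmx_tens. Qed.

Lemma mxtrace_adj n (A : 'M[C]_n) : \tr (adj A) = conjc (\tr A).
Proof. by rewrite rmorph_sum; apply: eq_bigr => i _; rewrite adjE. Qed.

Lemma unitaryC n (U : 'M[C]_n) : unitary U -> adj U *m U = 1%:M.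
Proof. exact: mulmx1C. Qed.

Lemma hermitian_conj m n (A : 'M[C]_m) (P : 'M[C]_(n, m)) :
  Defs.hermitian A -> Defs.hermitian (P *m A *m adj P).
Proof. by move=> hA; rewrite /Defs.hermitian !adjM adjK hA mulmxA. Qed.

Lemma hermitianD n (A B : 'M[C]_n) :
  Defs.hermitian A -> Defs.hermitian B -> Defs.hermitian (A + B).
Proof. by move=> hA hB; rewrite /Defs.hermitian adjD hA hB. Qed.

Lemma hermitianZ n x (A : 'M[C]_n) :
  x \is Num.real -> Defs.hermitian A -> Defs.hermitian (x *: A).
Proof. by move=> xR hA; rewrite /Defs.hermitian adjZ hA conjcE conj_Creal. Qed.

Lemma hermitian1 n : Defs.hermitian (1%:M : 'M[C]_n).
Proof. exact: adj1. Qed.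

Lemma mxtrace_herm_sqr n (N : 'M[C]_n) :
  Defs.hermitian N -> \tr (N *m N) = \sum_i \sum_k `|N i k| ^+ 2.
Proof.
move=> hN; apply: eq_bigr => i _; rewrite mxE; apply: eq_bigr => k _.
by rewrite -{2}hN adjE sqr_normc.
Qed.

Lemma mxtrace_herm_sqr_ge0 n (N : 'M[C]_n) :
  Defs.hermitian N -> 0 <= \tr (N *m N).
Proof.
move=> hN; rewrite mxtrace_herm_sqr //.
by apply: sumr_ge0 => i _; apply: sumr_ge0 => k _; rewrite exprn_ge0.
Qed.

Lemma mxtrace_herm_sqr_eq0 n (N : 'M[C]_n) :
  Defs.hermitian N -> \tr (N *m N) = 0 -> N = 0.
Proof.
move=> hN; rewrite mxtrace_herm_sqr // => N0; apply/matrixP => i k; rewrite mxE.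
have sqr_ge0 j l : 0 <= `|N j l| ^+ 2 := exprn_ge0 _ (normr_ge0 _).
have row0 : \sum_l `|N i l| ^+ 2 = 0.
  exact: psumr_eq0P (fun j _ => sumr_ge0 _ (fun l _ => sqr_ge0 j l)) N0 i isT.
have /eqP : `|N i k| ^+ 2 = 0.
  exact: psumr_eq0P (fun l _ => sqr_ge0 i l) row0 k isT.
by rewrite expf_eq0 normr_eq0 => /eqP.
Qed.

Lemma mxtrace_hermM_real n (A M : 'M[C]_n) :
  Defs.hermitian A -> Defs.hermitian M -> \tr (A *m M) \is Num.real.
Proof.
move=> hA hM; rewrite CrealE -conjcE -mxtrace_adj adjM hA hM.
by rewrite mxtrace_mulC.
Qed.

Lemma mxtrace_herm_cauchy_schwarz n (A M : 'M[C]_n) :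
  Defs.hermitian A -> Defs.hermitian M ->
  \tr (A *m M) ^+ 2 <= \tr (A *m A) * \tr (M *m M).
Proof.
move=> hA hM; set a := \tr (A *m A); set c := \tr (A *m M); set m := \tr (M *m M).
have [M0|m_neq0] := eqVneq m 0.
  by rewrite /c (mxtrace_herm_sqr_eq0 hM M0) mulmx0 linear0 M0 mulr0 expr0n.
have m_gt0 : 0 < m by rewrite lt_def m_neq0 mxtrace_herm_sqr_ge0.
have hN : Defs.hermitian (m *: A + (- c) *: M).
  apply: hermitianD; apply: hermitianZ => //; first exact: gtr0_real.
  by rewrite rpredN mxtrace_hermM_real.
have := mxtrace_herm_sqr_ge0 hN.
have -> : \tr ((m *: A + (- c) *: M) *m (m *: A + (- c) *: M)) = m * (m * a - c ^+ 2).
  rewrite mulmxDl !mulmxDr -!scalemxAl -!scalemxAr !scalerA !mxtraceD !mxtraceZ.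
  by rewrite (mxtrace_mulC M A) -/a -/c -/m; ring.
by rewrite pmulr_rge0 // subr_ge0 mulrC.
Qed.

Lemma mxtrace_center_sqr n (N : 'M[C]_n) : (0 < n)%N -> \tr N = 1 ->
  \tr ((N - n%:R^-1 *: 1%:M) *m (N - n%:R^-1 *: 1%:M)) = \tr (N *m N) - n%:R^-1.
Proof.
move=> n_gt0 trN; set k := n%:R^-1.
have kn : k * n%:R = 1 by rewrite mulVf // pnatr_eq0 -lt0n.
rewrite mulmxBl !mulmxBr -!scalemxAl -!scalemxAr !mul1mx !mulmx1 scalerA.
rewrite !linearB /= !mxtraceZ mxtrace1 trN -mulrA kn; ring.
Qed.

Lemma hermitian_center n (N : 'M[C]_n) :
  Defs.hermitian N -> Defs.hermitian (N - n%:R^-1 *: 1%:M).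
Proof.
move=> hN; rewrite -scaleNr; apply: hermitianD => //.
by apply: hermitianZ (hermitian1 n); rewrite rpredN rpredV realn.
Qed.

Lemma maximally_mixed_of_mxtrace_sqr_le n (N : 'M[C]_n) :
  (0 < n)%N -> Defs.hermitian N -> \tr N = 1 -> \tr (N *m N) <= n%:R^-1 ->
  N = n%:R^-1 *: 1%:M.
Proof.
move=> n_gt0 hN trN le_sq; have hA := hermitian_center hN.
apply/eqP; rewrite -subr_eq0; apply/eqP/(mxtrace_herm_sqr_eq0 hA)/eqP.
by rewrite eq_le mxtrace_herm_sqr_ge0 // andbT mxtrace_center_sqr // subr_le0.
Qed.

Lemma traceless_mxtrace_mul_sqr_le n (rho M : 'M[C]_n) : (0 < n)%N ->
  Defs.hermitian rho -> Defs.hermitian M -> \tr rho = 1 -> \tr M = 0 ->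
  \tr (rho *m M) ^+ 2 <= (\tr (rho *m rho) - n%:R^-1) * \tr (M *m M).
Proof.
move=> n_gt0 hrho hM trrho trM; rewrite -mxtrace_center_sqr //.
have -> : \tr (rho *m M) = \tr ((rho - n%:R^-1 *: 1%:M) *m M).
  by rewrite mulmxBl linearB /= -scalemxAl mul1mx mxtraceZ trM mulr0 subr0.
exact: mxtrace_herm_cauchy_schwarz (hermitian_center hrho) hM.
Qed.

Definition o0 : 'I_3 := @Ordinal 3 0 isT.
Definition o1 : 'I_3 := @Ordinal 3 1 isT.
Definition o2 : 'I_3 := @Ordinal 3 2 isT.
Definition q0 : 'I_2 := @Ordinal 2 0 isT.
Definition q1 : 'I_2 := @Ordinal 2 1 isT.

Lemma big_ord3 (V : nmodType) (F : 'I_3 -> V) : \sum_(k < 3) F k = F o0 + F o1 + F o2.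
Proof.
by rewrite !big_ord_recr big_ord0 /= add0r; congr (F _ + F _ + F _); apply/val_inj.
Qed.

Lemma big_ord2 (V : nmodType) (F : 'I_2 -> V) : \sum_(k < 2) F k = F q0 + F q1.
Proof. by rewrite !big_ord_recr big_ord0 /= add0r; congr (F _ + F _); apply/val_inj. Qed.

Lemma big_mxtens_index (V : nmodType) m n (F : 'I_(m * n) -> V) :
  \sum_k F k = \sum_(i < m) \sum_(j < n) F (mxtens_index (i, j)).
Proof.
rewrite pair_big (reindex (@mxtens_index m n)) /=; first by apply: eq_bigr => -[].
by exists (@mxtens_unindex m n) => x _; rewrite (mxtens_indexK, mxtens_unindexK).
Qed.

Lemma ord2P (i : 'I_2) : i = q0 \/ i = q1.
Proof. by case: i => [[|[|]] Hi] //; [left|right]; apply/val_inj. Qed.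

Ltac complex_ring :=
  apply/eqP; rewrite eq_complex /=; apply/andP; split; apply/eqP; ring.

Section PauliEntries.
Variable a : 'rV[R]_3.

Lemma wdots00 : wdots a q0 q0 = (a 0 o2)%:C.
Proof. by rewrite summxE big_ord3 !mxE /=; complex_ring. Qed.

Lemma wdots01 : wdots a q0 q1 = (a 0 o0)%:C - 'i * (a 0 o1)%:C.
Proof. by rewrite summxE big_ord3 !mxE /=; complex_ring. Qed.

Lemma wdots10 : wdots a q1 q0 = (a 0 o0)%:C + 'i * (a 0 o1)%:C.
Proof. by rewrite summxE big_ord3 !mxE /=; complex_ring. Qed.

Lemma wdots11 : wdots a q1 q1 = - (a 0 o2)%:C.
Proof. by rewrite summxE big_ord3 !mxE /=; complex_ring. Qed.

End PauliEntries.

Definition wdotsE := (wdots00, wdots01, wdots10, wdots11).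

Lemma mxtrace_wdots (a : 'rV[R]_3) : \tr (wdots a) = 0.
Proof. by rewrite /mxtrace big_ord2 !wdotsE addrN. Qed.

Lemma mxtrace_wdotsM (a b : 'rV[R]_3) :
  \tr (wdots a *m wdots b) = (2 * \sum_k a 0 k * b 0 k)%:C.
Proof. by rewrite /mxtrace big_ord2 !mxE !big_ord2 !wdotsE big_ord3; complex_ring. Qed.

Lemma wdots_herm (a : 'rV[R]_3) : Defs.hermitian (wdots a).
Proof.
apply/matrixP => i j; rewrite adjE.
by case: (ord2P i) => ->; case: (ord2P j) => ->; rewrite !wdotsE; complex_ring.
Qed.

Lemma mxtrace_tens m n (A : 'M[C]_m) (B : 'M[C]_n) : \tr (A *t B) = \tr A * \tr B.
Proof. by rewrite /mxtrace mulr_sum; apply: eq_bigr => i _; rewrite !mxE. Qed.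

Definition corr_op (u v : 'I_3 -> 'rV[R]_3) : 'M[C]_(2 * 2) :=
  \sum_i wdots (u i) *t wdots (v i).

Lemma corr_op_herm u v : Defs.hermitian (corr_op u v).
Proof.
by rewrite /Defs.hermitian adj_sum; apply: eq_bigr => i _; rewrite adj_tens !wdots_herm.
Qed.

Lemma mxtrace_corr_op u v : \tr (corr_op u v) = 0.
Proof.
by rewrite raddf_sum /= big1 // => i _; rewrite mxtrace_tens mxtrace_wdots mul0r.
Qed.

Lemma mxtrace_corr_op_sqr u v : (forall i, unit_vec (u i)) -> orthonormal3 v ->
  \tr (corr_op u v *m corr_op u v) = 12%:R.
Proof.
move=> hu hv; rewrite /corr_op mulmx_suml raddf_sum.
transitivity (\sum_(i < 3) (4 : C)).
  apply: eq_bigr => i _; rewrite mulmx_sumr raddf_sum (bigD1 i) //= big1 => [|j ji].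
    rewrite tensmx_mul mxtrace_tens !mxtrace_wdotsM hv eqxx addr0.
    by rewrite (eq_bigr _ (fun k _ => esym (expr2 (u i 0 k)))) hu; complex_ring.
  by rewrite tensmx_mul mxtrace_tens !mxtrace_wdotsM hv eq_sym (negPf ji) mulr0 mulr0.
by rewrite big_ord3; complex_ring.
Qed.

Lemma unitary_conjM m n (U : 'M[C]_(m, n)) (A B : 'M[C]_n) : adj U *m U = 1%:M ->
  U *m A *m adj U *m (U *m B *m adj U) = U *m (A *m B) *m adj U.
Proof. by move=> hU; rewrite !mulmxA -(mulmxA _ (adj U) U) hU mulmx1. Qed.

Lemma mxtrace_unitary_conj m n (U : 'M[C]_(m, n)) (A : 'M[C]_n) :
  adj U *m U = 1%:M -> \tr (U *m A *m adj U) = \tr A.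
Proof. by move=> hU; rewrite mxtrace_mulC mulmxA hU mul1mx. Qed.

Lemma AUS3_bound_of_real_sqr_le3 (c : C) : c \is Num.real -> c ^+ 2 <= 3%:R ->
  (Num.sqrt (3 : R))^-1%:C * `|c| <= 1.
Proof.
move=> cR; rewrite -(real_normK cR) => c2.
have s3_gt0 : 0 < Num.sqrt (3 : R) by rewrite sqrtr_gt0 ltr0n.
have : `|c| <= (Num.sqrt (3 : R))%:C.
  have s3_sqr : (Num.sqrt (3 : R))%:C ^+ 2 = 3%:R.
    by rewrite -rmorphXn /= sqr_sqrtr ?ler0n // rmorph_nat.
  by rewrite -ler_sqr ?nnegrE ?normr_ge0 ?lecR ?sqrtr_ge0 // s3_sqr.
have s3K : (Num.sqrt (3 : R))^-1%:C * (Num.sqrt (3 : R))%:C = 1.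
  by rewrite -rmorphM /= mulVf ?gt_eqF.
move=> /(ler_wpM2l (_ : 0 <= (Num.sqrt (3 : R))^-1%:C)); rewrite s3K.
by apply; rewrite lecR invr_ge0 ltW.
Qed.

Lemma AUS3_of_mxtrace_sqr_le (sigma : 'M[C]_(2 * 2)) :
  density sigma -> \tr (sigma *m sigma) <= 2^-1 -> AUS3 sigma.
Proof.
move=> dsigma le_sq; split => // U u v hU hu hv.
have [hsigma _ trsigma] := dsigma; have hUU := unitaryC hU.
have hrho := hermitian_conj U hsigma.
rewrite -linear_sum -mulmx_sumr -/(corr_op u v) /=.
apply: AUS3_bound_of_real_sqr_le3; first exact: mxtrace_hermM_real (corr_op_herm u v).
apply: le_trans (traceless_mxtrace_mul_sqr_le _ hrho (corr_op_herm u v) _ _) _ => //.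
- by rewrite mxtrace_unitary_conj.
- exact: mxtrace_corr_op.
rewrite mxtrace_corr_op_sqr // unitary_conjM // mxtrace_unitary_conj //.
have -> : (3%:R : C) = (2^-1 - (2 * 2)%:R^-1) * 12%:R by field.
by rewrite ler_wpM2r ?ler0n // lerD2r.
Qed.

Definition amplitude_mx (Y : 'cV[C]_(2 * 2 * 2)) : 'M[C]_(2 * 2, 2) :=
  \matrix_(i, k) Y (mxtens_index (i, k)) 0.

Lemma ptrC_amplitude_mx Y :
  ptrC (Y *m adj Y) = amplitude_mx Y *m adj (amplitude_mx Y).
Proof.
apply/matrixP => i j; rewrite !mxE; apply: eq_bigr => k _.
by rewrite !mxE big_ord1 !adjE ?mxE.
Qed.

Lemma ptrAB_amplitude_mx Y :
  ptrAB (Y *m adj Y) = (adj (amplitude_mx Y) *m amplitude_mx Y)^T.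
Proof.
apply/matrixP => i j; rewrite !mxE; apply: eq_bigr => k _.
by rewrite !mxE big_ord1 !adjE ?mxE mulrC.
Qed.

Lemma density_mulmx_adj m n (W : 'M[C]_(m, n)) :
  \tr (adj W *m W) = 1 -> density (W *m adj W).
Proof.
move=> trW; split; last by rewrite mxtrace_mulC.
  by rewrite /Defs.hermitian adjM adjK.
move=> v; have -> : adj v *m (W *m adj W) *m v = adj (adj W *m v) *m (adj W *m v).
  by rewrite adjM adjK !mulmxA.
rewrite mxE.
by apply: sumr_ge0 => k _; rewrite adjE mulrC mulcJ_ge0.
Qed.

Lemma mxtrace_mulmx_adj_sqr m n (W : 'M[C]_(m, n)) :
  \tr (W *m adj W *m (W *m adj W)) = \tr (adj W *m W *m (adj W *m W)).
Proof. by rewrite !mulmxA mxtrace_mulC !mulmxA. Qed.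

Lemma herm_spectral n (S : 'M[C]_n) : Defs.hermitian S ->
  exists (P : 'M[C]_n) (d : 'I_n -> R),
    unitary P /\ P *m S *m adj P = diag_mx (\row_k (d k)%:C).
Proof.
move=> hS; have conjT_adj m k (A : 'M[C]_(m, k)) : map_mx Num.conj A^T = adj A.
  by apply/matrixP => i j; rewrite adjE !mxE conjcE.
set P := spectralmx S; have uP := spectral_unitarymx S.
have PP : unitary P by move/unitarymxP: uP; rewrite conjT_adj.
have /orthomx_spectralP S_eq : S \is normalmx by apply/normalmxP; rewrite !conjT_adj hS.
have hD : P *m S *m adj P = diag_mx (spectral_diag S).
  by rewrite [in LHS]S_eq (invmx_unitary uP) conjT_adj !mulmxA PP mul1mx -mulmxA PP mulmx1.
exists P, (fun k => complex.Re (spectral_diag S 0 k)); split => //; rewrite hD.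
congr diag_mx; apply/rowP => k; rewrite mxE.
have /matrixP/(_ k k) := hermitian_conj P hS; rewrite hD adjE !mxE eqxx mulr1n.
by case: (spectral_diag S 0 k) => x y [] /= hy; congr Complex; lra.
Qed.

Lemma card_support_le_rank n (d : 'rV[C]_n) :
  (#|[set k | (d 0 k != 0)%R]| <= \rank (diag_mx d))%N.
Proof.
set A := [set k | _]; pose f (i : 'I_#|A|) := enum_val i.
have f_inj : injective f := enum_val_inj.
have <- : \rank (mxsub f f (diag_mx d)) = #|A|.
  apply: mxrank_unit; have -> : mxsub f f (diag_mx d) = diag_mx (\row_i d 0 (f i)).
    by apply/matrixP => i j; rewrite !mxE (inj_eq f_inj).
  rewrite unitmxE det_diag unitfE; apply/prodf_neq0 => i _.
  by rewrite mxE; move: (enum_valP i); rewrite inE.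
rewrite mxsubrc; apply: leq_trans (mxrankS (rowsub_sub _ _)) _.
by rewrite -[X in colsub _ X]mulmx1 -mulmx_colsub mxrankM_maxl.
Qed.

Lemma diag_mx_two_zeros n (d : 'rV[C]_n) : (\rank (diag_mx d) + 2 <= n)%N ->
  exists a b, [/\ a != b, d 0 a = 0 & d 0 b = 0].
Proof.
move=> rk; have : (1 < #|[set k | (d 0 k == 0)%R]|)%N.
  have := cardsC [set k | d 0 k == 0]; rewrite card_ord.
  have -> : ~: [set k | d 0 k == 0] = [set k | d 0 k != 0] by apply/setP => k; rewrite !inE.
  by have := card_support_le_rank d; lia.
case/card_gt1P => a [b [za zb ab]]; exists a, b.
by move: za zb; rewrite !inE => /eqP za /eqP zb.
Qed.

Definition k0 : 'I_(2 * 2) := @Ordinal 4 0 isT.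
Definition k1 : 'I_(2 * 2) := @Ordinal 4 1 isT.
Definition k2 : 'I_(2 * 2) := @Ordinal 4 2 isT.
Definition k3 : 'I_(2 * 2) := @Ordinal 4 3 isT.

Lemma big_ord4 T (idx : T) (op : Monoid.law idx) (F : 'I_(2 * 2) -> T) :
  \big[op/idx]_(k < 2 * 2) F k = op (op (op (F k0) (F k1)) (F k2)) (F k3).
Proof.
rewrite !big_ord_recr big_ord0 /= Monoid.mul1m.
by congr (op (op (op (F _) (F _)) (F _)) (F _)); apply/val_inj.
Qed.

(* Column k is the unnormalised Bell state |00>+|11>, |00>-|11>, |01>+|10>, |01>-|10>. *)
Definition bell : 'M[C]_(2 * 2) :=
  \matrix_(r, k) let: (a, b) := mxtens_unindex r in
    if (a == b :> nat) == (k < 2)%N then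
      (if odd k && (a != 0 :> nat) then -1 else 1)
    else 0.

Lemma bellE a b k : bell (mxtens_index (a, b)) k =
  if (a == b :> nat) == (k < 2)%N then
    (if odd k && (a != 0 :> nat) then -1 else 1)
  else 0.
Proof. by rewrite mxE mxtens_indexK. Qed.

Lemma bell_unitary : bell *m adj bell = 2%:R *: 1%:M.
Proof.
apply/matrixP => r c; case: (mxtens_indexP r) => a b; case: (mxtens_indexP c) => a' b'.
rewrite !mxE big_ord4 !adjE !bellE.
by case: (ord2P a) => ->; case: (ord2P b) => ->; case: (ord2P a') => ->;
  case: (ord2P b') => ->; rewrite /= /conjc /=; complex_ring.
Qed.

Definition bell_sign (k : 'I_(2 * 2)) (j : 'I_3) : R :=
  match val k, val j with
  | 0, 1 | 1, 0 | 2, 2 | 3, _ => -1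
  | _, _ => 1
  end.

Lemma bell_corr_diag (a b : 'rV[R]_3) k :
  (adj bell *m (wdots a *t wdots b) *m bell) k k =
  (2 * \sum_j bell_sign k j * (a 0 j * b 0 j))%:C.
Proof.
rewrite !mxE !big_mxtens_index !big_ord2 !mxE !big_mxtens_index !big_ord2.
rewrite !adjE !bellE !tensmxE !wdotsE big_ord3.
by case: k => [[|[|[|[|]]]] Hk] //=; rewrite /conjc /bell_sign /=; complex_ring.
Qed.

Definition bell_corr (d : 'I_(2 * 2) -> R) (j : 'I_3) : R := \sum_k d k * bell_sign k j.

Lemma mxtrace_bell_diag (d : 'I_(2 * 2) -> R) (a b : 'rV[R]_3) :
  \tr (2^-1 *: (bell *m diag_mx (\row_k (d k)%:C) *m adj bell)
       *m (wdots a *t wdots b)) =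
  (\sum_j bell_corr d j * (a 0 j * b 0 j))%:C.
Proof.
rewrite -scalemxAl mxtraceZ -!mulmxA mxtrace_mulC -!mulmxA (mulmxA (adj bell)).
rewrite mul_diag_mx /mxtrace.
under eq_bigr => k _ do rewrite mxE bell_corr_diag mxE -rmorphM.
have -> : 2^-1 = (2^-1 : R)%:C by rewrite fmorphV /= rmorph_nat.
rewrite -rmorph_sum -rmorphM /=; congr (_%:C).
rewrite /bell_corr; under [RHS]eq_bigr => j _ do rewrite mulr_suml.
rewrite [RHS]exchange_big mulr_sumr; apply: eq_bigr => k _ /=.
rewrite mulrCA mulKf ?pnatr_eq0 // mulr_sumr.
by apply: eq_bigr => j _; exact: mulrA.
Qed.

Lemma sum_bell_corr_sqr (d : 'I_(2 * 2) -> R) :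
  \sum_j bell_corr d j ^+ 2 = 4 * \sum_k d k ^+ 2 - (\sum_k d k) ^+ 2.
Proof. by rewrite big_ord3 /bell_corr !big_ord4 /bell_sign /=; ring. Qed.

Lemma bell_corr_sqr_diff (d : 'I_(2 * 2) -> R) :
  (bell_corr d o0 ^+ 2 - bell_corr d o1 ^+ 2) *
  (bell_corr d o0 ^+ 2 - bell_corr d o2 ^+ 2) *
  (bell_corr d o1 ^+ 2 - bell_corr d o2 ^+ 2) =
  64 * \prod_(i < 2 * 2) \prod_(j < 2 * 2 | (i < j)%N) (d j - d i).
Proof.
under eq_bigr => i _ do rewrite big_mkcond.
by rewrite /bell_corr !big_ord4 /bell_sign /=; ring.
Qed.

Lemma prod_pairwise_subr_eq0 n (f : 'I_n -> R) a b : a != b -> f a = f b ->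
  \prod_(i < n) \prod_(j < n | (i < j)%N) (f j - f i) = 0.
Proof.
move=> ab fab; wlog lt_ab : a b ab fab / (a < b)%N.
  move=> wlog_ab; case: (ltngtP a b) => [|gt_ab|/val_inj abE]; first exact: wlog_ab.
    by apply: (wlog_ab b a); rewrite // eq_sym.
  by rewrite abE eqxx in ab.
by rewrite (bigD1 a) //= (bigD1 b) //= fab subrr mul0r mul0r.
Qed.

Lemma bell_corr_sqr_pair (d : 'I_(2 * 2) -> R) a b : a != b -> d a = d b ->
  exists p : {perm 'I_3}, bell_corr d (p o1) ^+ 2 = bell_corr d (p o2) ^+ 2.
Proof.
move=> ab dab; have := bell_corr_sqr_diff d.
rewrite (prod_pairwise_subr_eq0 ab dab) mulr0 /= => /eqP.
rewrite !mulf_eq0 !subr_eq0 => /orP[/orP[]|] /eqP t_eq.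
- by exists (tperm o0 o2); rewrite tpermD // tpermR t_eq.
- by exists (tperm o0 o1); rewrite tpermR tpermD.
- by exists 1%g; rewrite !perm1.
Qed.

Lemma sqr_sqrtr_inv n : Num.sqrt (n.+1%:R^-1 : R) ^+ 2 = n.+1%:R^-1.
Proof. by rewrite sqr_sqrtr // invr_ge0 ler0n. Qed.

Definition helmert (i k : 'I_3) : R :=
  match val i, val k with
  | _, 0 => Num.sqrt 3^-1
  | 0, 1 => Num.sqrt 2^-1
  | 1, 1 => - Num.sqrt 2^-1
  | _, 1 => 0
  | 0, _ | 1, _ => Num.sqrt 6^-1
  | _, _ => - (2 * Num.sqrt 6^-1)
  end.

Lemma helmert_orth i j : \sum_k helmert i k * helmert j k = (i == j)%:R.
Proof.
have := sqr_sqrtr_inv 2; have := sqr_sqrtr_inv 1; have := sqr_sqrtr_inv 5.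
rewrite big_ord3 /helmert /=.
by case: i => [[|[|[|]]] ?] //; case: j => [[|[|[|]]] ?] //= *; nra.
Qed.

(* [helmert] is the transposed Helmert matrix: the squared entries of its columns
   1 and 2, (1/2, 1/2, 0) and (1/6, 1/6, 2/3), add up to 2/3 in every row. *)
Lemma helmert_weights (t : 'I_3 -> R) i : t o1 ^+ 2 = t o2 ^+ 2 ->
  \sum_k t k ^+ 2 * helmert i k ^+ 2 = (\sum_k t k ^+ 2) / 3.
Proof.
move=> t12; have := sqr_sqrtr_inv 2; have := sqr_sqrtr_inv 1; have := sqr_sqrtr_inv 5.
rewrite !big_ord3 /helmert /=.
by case: i => [[|[|[|]]] ?] //= *; nra.
Qed.

Lemma corr_sum_witness (t : 'I_3 -> R) (p : {perm 'I_3}) :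
  t (p o1) ^+ 2 = t (p o2) ^+ 2 -> 0 < \sum_j t j ^+ 2 ->
  exists u v, [/\ forall i, unit_vec (u i), orthonormal3 v &
    \sum_i \sum_j t j * (u i 0 j * v i 0 j) = Num.sqrt (3 * \sum_j t j ^+ 2)].
Proof.
move=> tp s_gt0; set s := \sum_j t j ^+ 2 in s_gt0 *.
set r := Num.sqrt (s / 3).
have r_gt0 : 0 < r by rewrite sqrtr_gt0 divr_gt0.
pose v i : 'rV[R]_3 := \row_k helmert i ((p^-1)%g k).
pose u i : 'rV[R]_3 := \row_k (r^-1 * (t k * v i 0 k)).
have weights i : \sum_k t k ^+ 2 * v i 0 k ^+ 2 = s / 3.
  rewrite /s (reindex_inj (@perm_inj _ p)) [in RHS](reindex_inj (@perm_inj _ p)) /=.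
  by under eq_bigr => k _ do rewrite /v mxE permK; exact: helmert_weights.
have sum_u i : \sum_j t j * (u i 0 j * v i 0 j) = r^-1 * (s / 3).
  by rewrite -(weights i) mulr_sumr; apply: eq_bigr => k _; rewrite mxE; ring.
exists u, v; split.
- move=> i; rewrite /unit_vec.
  transitivity (r^-1 ^+ 2 * \sum_k t k ^+ 2 * v i 0 k ^+ 2).
    by rewrite mulr_sumr; apply: eq_bigr => k _; rewrite mxE; ring.
  rewrite weights -(sqr_sqrtr (_ : 0 <= s / 3)) ?divr_ge0 ?ltW //.
  by rewrite -exprMn mulVf ?gt_eqF ?expr1n.
- move=> i j; under eq_bigr => k _ do rewrite !mxE.
  rewrite (reindex_inj (@perm_inj _ p)) /=.
  by under eq_bigr => k _ do rewrite !permK; exact: helmert_orth.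
rewrite (eq_bigr _ (fun i _ => sum_u i)) big_ord3.
have r_sqr : r ^+ 2 = s / 3 by rewrite sqr_sqrtr // divr_ge0 // ltW.
have -> : 3 * s = (s / r) ^+ 2 by rewrite expr_div_n r_sqr; field; rewrite gt_eqF.
by rewrite sqrtr_sqr ger0_norm ?divr_ge0 ?ltW //; field; rewrite gt_eqF.
Qed.

Lemma AUS3_bell_corr_le (sigma P : 'M[C]_(2 * 2)) (d : 'I_(2 * 2) -> R) :
  AUS3 sigma -> unitary P -> P *m sigma *m adj P = diag_mx (\row_k (d k)%:C) ->
  forall u v, (forall i, unit_vec (u i)) -> orthonormal3 v ->
  \sum_i \sum_j bell_corr d j * (u i 0 j * v i 0 j) <= Num.sqrt 3.
Proof.
move=> [_ hA] hP hD u v hu hv; set c := (Num.sqrt (2^-1 : R))%:C.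
have cc : c * conjc c = 2^-1.
  rewrite conjc_real -rmorphM /= -expr2 sqr_sqrtr ?invr_ge0 ?ler0n //.
  by rewrite fmorphV /= rmorph_nat.
have hU : unitary (c *: (bell *m P)).
  rewrite /unitary adjZ adjM -scalemxAl -scalemxAr scalerA cc !mulmxA.
  rewrite -(mulmxA bell) hP mulmx1 bell_unitary scalerA.
  by rewrite mulVr ?unitfE ?pnatr_eq0 // scale1r.
have := hA _ u v hU hu hv.
have -> : c *: (bell *m P) *m sigma *m adj (c *: (bell *m P)) =
    2^-1 *: (bell *m diag_mx (\row_k (d k)%:C) *m adj bell).
  by rewrite adjZ adjM -hD -!scalemxAl -scalemxAr scalerA cc !mulmxA.
under eq_bigr => i _ do rewrite mxtrace_bell_diag.
rewrite -rmorph_sum; set X := \sum_i _.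
have -> : `|X%:C| = `|X|%:C by rewrite normc_def /= expr0n addr0 sqrtr_sqr.
rewrite -rmorphM lecR ler_pdivrMl ?sqrtr_gt0 ?ltr0n // mulr1.
exact: le_trans (ler_norm X).
Qed.

Lemma mxtrace_sqr_le_of_AUS3 (W : 'M[C]_(2 * 2, 2)) :
  AUS3 (W *m adj W) -> \tr (W *m adj W *m (W *m adj W)) <= 2^-1.
Proof.
move=> hA; have [[hS _ trS] _] := hA.
have [P [d [hP hD]]] := herm_spectral hS; have hP' := unitaryC hP.
have sum_d : \sum_k d k = 1.
  apply: complexI; rewrite rmorph_sum rmorph1 -trS -(mxtrace_unitary_conj _ hP') hD.
  by rewrite mxtrace_diag; apply: eq_bigr => k _; rewrite mxE.
have -> : \tr (W *m adj W *m (W *m adj W)) = (\sum_k d k ^+ 2)%:C.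
  rewrite -(mxtrace_unitary_conj _ hP') -unitary_conjM // hD mulmx_diag mxtrace_diag.
  by rewrite rmorph_sum; apply: eq_bigr => k _; rewrite !mxE rmorphXn.
have [a [b [ab da db]]] : exists a b, [/\ a != b, d a = 0 & d b = 0].
  have [|a [b [ab]]] := @diag_mx_two_zeros _ (\row_k (d k)%:C).
    rewrite -hD mulmxA; suff : (\rank (P *m W *m adj W *m adj P) <= 2)%N by lia.
    apply: leq_trans (mxrankM_maxl _ _) _.
    exact: leq_trans (mxrankM_maxl _ _) (rank_leq_col _).
  rewrite !mxE => /(congr1 (@complex.Re _)) /= da /(congr1 (@complex.Re _)) /= db.
  by exists a, b.
have [p tp] := bell_corr_sqr_pair ab (etrans da (esym db)).
have := sum_bell_corr_sqr d; rewrite sum_d expr1n => s_eq.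
have -> : 2^-1 = (2^-1 : R)%:C by rewrite fmorphV /= rmorph_nat.
rewrite lecR; suff : \sum_j bell_corr d j ^+ 2 <= 1 by lra.
have [s_le0|s_gt0] := lerP (\sum_j bell_corr d j ^+ 2) 0; first lra.
have [u [v [hu hv sum_uv]]] := corr_sum_witness tp s_gt0.
have := AUS3_bell_corr_le hA hP hD hu hv.
by rewrite sum_uv ler_sqrt ?ler0n //; lra.
Qed.

End TwoQubits.

Unset Implicit Arguments.

Theorem theorem5 (R : realType) (Y : 'cV[R[i]]_(2 * 2 * 2)) :
  adj Y *m Y = 1%:M ->
  (AUS3 (ptrC (Y *m adj Y)) <-> ptrAB (Y *m adj Y) = 2%:R^-1 *: 1%:M).
Proof.
move=> _; rewrite ptrC_amplitude_mx ptrAB_amplitude_mx; set W := amplitude_mx Y.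
have hG : Defs.hermitian (adj W *m W) by rewrite /Defs.hermitian adjM adjK.
split => [hA | hG_half].
  have [[_ _ trS] _] := hA.
  have trG : \tr (adj W *m W) = 1 by rewrite mxtrace_mulC.
  have := mxtrace_sqr_le_of_AUS3 hA; rewrite mxtrace_mulmx_adj_sqr => le_sq.
  by rewrite (maximally_mixed_of_mxtrace_sqr_le _ hG trG le_sq) // linearZ /= trmx1.
have GE : adj W *m W = 2^-1 *: 1%:M.
  by rewrite -[adj W *m W]trmxK hG_half linearZ /= trmx1.
have trG : \tr (adj W *m W) = 1 by rewrite GE mxtraceZ mxtrace1 mulVf ?pnatr_eq0.
apply: AUS3_of_mxtrace_sqr_le; first exact: density_mulmx_adj.
rewrite mxtrace_mulmx_adj_sqr GE -scalemxAl mul1mx scalerA mxtraceZ mxtrace1.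
by rewrite mulfVK ?pnatr_eq0.
Qed.
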